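(* Let $\omega^{(1)}=(2,2,1)$, $\omega^{(2)}=(2,4)$, $\omega^{(3)}=(4,1,1)$, $\omega^{(4)}=(4,3)$, $\omega^{(5)}=(6,2)$ (weight vectors of degree $10$). Then (i) $QP^{\otimes6}_{10}\cong\bigoplus_{j=1}^5QP^{\otimes6}_{10}(\omega^{(j)})$ as $\mathbb F_2$-vector spaces; (ii) $(QP^{\otimes6}_{10})^0\cong\bigoplus_{j=1}^4(QP^{\otimes6}_{10})^0(\omega^{(j)})$ and $(QP^{\otimes6}_{10})^{>0}\cong\bigoplus_{j=2}^5(QP^{\otimes6}_{10})^{>0}(\omega^{(j)})$, where for $j=1,2,3,4,5$ respectively $\dim(QP^{\otimes6}_{10})^0(\omega^{(j)})=400,30,270,180,0$ and $\dim(QP^{\otimes6}_{10})^{>0}(\omega^{(j)})=0,4,10,36,15$.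
   Context: $P^{\otimes h}=\mathbb F_2[t_1,\dots,t_h]$ ($\deg t_i=1$) with the standard action of the mod 2 Steenrod algebra $\mathcal A$; $QP^{\otimes h}_n=P^{\otimes h}_n/(P^{\otimes h}_n\cap\overline{\mathcal A}P^{\otimes h})$. The weight vector of $t=t_1^{a_1}\cdots t_h^{a_h}$ is $\omega(t)$ with $\omega_i(t)=\sum_j\alpha_{i-1}(a_j)$, $\alpha_k(a)$ the $k$-th binary digit of $a$; degree of $\omega$ is $\sum2^{i-1}\omega_i$; weight vectors are ordered left-lexicographically (trailing zeros omitted). For $\omega$ of degree $n$, $P^{\otimes h}_n(\omega)$ (resp. $P^{\otimes h}_n(<\omega)$) is spanned by degree-$n$ monomials with $\omega(t)\le\omega$ (resp. $<\omega$); $u\equiv_\omega v$ iff $u+v\in(\overline{\mathcal A}P^{\otimes h}\cap P^{\otimes h}_n(\omega))+P^{\otimes h}_n(<\omega)$; $QP^{\otimes h}_n(\omega)=P^{\otimes h}_n(\omega)/\equiv_\omega$. $(P^{\otimes h})^0$ (resp. $(P^{\otimes h})^{>0}$) is spanned by monomials with some exponent $0$ (resp. all exponents positive); these are $\mathcal A$-submodules, $(QP^{\otimes h}_n)^0$, $(QP^{\otimes h}_n)^{>0}$ are their indecomposables in degree $n$, and $(QP^{\otimes h}_n)^0(\omega)$, $(QP^{\otimes h}_n)^{>0}(\omega)$ are the analogues of $QP^{\otimes h}_n(\omega)$ inside these submodules. *)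

From mathcomp Require Import all_boot all_order all_algebra.
Set Implicit Arguments. Unset Strict Implicit. Unset Printing Implicit Defensive.
Import GRing.Theory.
Local Open Scope ring_scope.

Section HitProblem.
Variables (h n : nat).

(* Exponent vectors (a_1,...,a_h) with 0 <= a_j <= n: every monomial of degree
   <= n is of this form.  Such an exponent vector a stands for t_1^{a_1}...t_h^{a_h}. *)
Definition Mon := {ffun 'I_h -> 'I_n.+1}.

(* Ambient F_2-vector space spanned by these monomials (P^{(x)h} in degrees <= n,
   identified with F_2-valued functions on monomials = coefficient vectors). *)
Definition Amb := {ffun Mon -> ('F_2)^o}.

Definition mono (a : Mon) : Amb := [ffun b => (b == a)%:R].

Definition mdeg (a : Mon) : nat := (\sum_(j < h) (a j : nat))%N.

(* Sq^k (t^a) by the Cartan formula and Sq^i(t^m) = C(m,i) t^{m+i}: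
   Sq^k(t^a) = sum_{b >= a, |b| = |a| + k} prod_j C(a_j, b_j - a_j) t^b. *)
Definition Sq (k : nat) (a : Mon) : Amb :=
  \sum_(b : Mon | (mdeg b == mdeg a + k)%N && [forall j, (a j <= b j)%N])
     ((\prod_(j < h) 'C(a j, b j - a j))%N)%:R *: mono b.

Definition alpha (k m : nat) : nat := odd (m %/ 2 ^ k).

(* Weight vector omega(t), padded with zeros to length n.+1
   (omega_i(t) = 0 for i > n.+1 since all exponents are <= n < 2^(n+1)). *)
Definition weight (a : Mon) : seq nat :=
  [seq (\sum_(j < h) alpha i (a j))%N | i <- iota 0 n.+1].

Definition pad (w : seq nat) : seq nat := take n.+1 (w ++ nseq n.+1 0%N).

End HitProblem.

Fixpoint lexle (s t : seq nat) : bool :=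
  match s, t with
  | [::], _ => true
  | _ :: _, [::] => false
  | x :: s', y :: t' => (x < y)%N || ((x == y) && lexle s' t')
  end.
Definition lexlt (s t : seq nat) : bool := lexle s t && (s != t).

Section Spaces.
Variables (h n : nat).
(* S : a class of monomials spanning an A-submodule:
   all monomials, (P)^0, or (P)^{>0} *)
Variable S : pred (Mon h n).

Definition Pspan (Q : pred (Mon h n)) : {vspace Amb h n} :=
  <<[seq mono a | a <- enum (Mon h n) & [&& mdeg a == n, S a & Q a]]>>%VS.

(* (bar A M) cap M_n, for M the submodule spanned by S:
   spanned by Sq^k(t^a), k >= 1, t^a in S, deg t^a + k = n *)
Definition hitn : {vspace Amb h n} :=
  <<[seq Sq (n - mdeg a) a | a <- enum (Mon h n) & S a && (mdeg a < n)%N]>>%VS.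

Definition Pn := Pspan predT.
Definition Pw (w : seq nat) := Pspan (fun a => lexle (weight a) (pad n w)).
Definition Plt (w : seq nat) := Pspan (fun a => lexlt (weight a) (pad n w)).

(* dim of QM_n = M_n / (M_n cap bar A M) *)
Definition QPdim : nat := (\dim Pn - \dim (hitn :&: Pn))%N.
(* dim of QM_n(omega) = M_n(omega) / ((bar A M cap M_n(omega)) + M_n(<omega)) *)
Definition QPwdim (w : seq nat) : nat :=
  (\dim (Pw w) - \dim ((hitn :&: Pw w) + Plt w))%N.
End Spaces.

Definition allmon h n : pred (Mon h n) := predT.
Definition zeromon h n : pred (Mon h n) := fun a => [exists j, (a j == 0 :> nat)].
Definition posmon h n : pred (Mon h n) := fun a => [forall j, (a j != 0 :> nat)].

Definition omega1 : seq nat := [:: 2; 2; 1]%N.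
Definition omega2 : seq nat := [:: 2; 4]%N.
Definition omega3 : seq nat := [:: 4; 1; 1]%N.
Definition omega4 : seq nat := [:: 4; 3]%N.
Definition omega5 : seq nat := [:: 6; 2]%N.

(* Every space in the statement is spanned by monomials of degree 10 in six
   variables, so the theorem is a finite rank computation over F_2.  The hit
   elements of degree 10 are spanned by the Sq^(10-d)(t^a), deg t^a = d < 10,
   expanded by the Cartan formula.  For a weight vector w, order the monomials
   first by weight compared with w (higher first) and then lexicographically,
   and bring these generators to echelon form.  A pivot is the least monomial
   of its row, so the rows with pivot of weight <= w span the hit elements of
   P(w), the rows with pivot of weight < w lie in P(<w), and
   dim QP(w) = #{monomials of weight w} - #{pivots of weight w}.  The
   elimination is run by the kernel's evaluator, and its output is accepted
   only after checking that it is in echelon form. *)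

From mathcomp Require Import all_boot all_order all_algebra zify.
Set Implicit Arguments. Unset Strict Implicit. Unset Printing Implicit Defensive.
Import GRing.Theory.

Fixpoint ltlex (s t : seq nat) : bool :=
  match s, t with
  | _, [::] => false
  | [::], _ :: _ => true
  | x :: s', y :: t' => (x < y) || ((x == y) && ltlex s' t')
  end.

Lemma ltlex_irr : irreflexive ltlex.
Proof. by elim=> //= x s ->; rewrite ltnn eqxx. Qed.

Lemma ltlex_trans : transitive ltlex.
Proof.
move=> t s u; elim: s t u => [|x s IH] [|y t] [|z u] //=.
case/orP=> [lt1|/andP[/eqP<- lt1]]; case/orP=> [lt2|/andP[/eqP<- lt2]].
- by rewrite (ltn_trans lt1 lt2).
- by rewrite lt1.
- by rewrite lt2.
- by rewrite eqxx (IH _ _ lt1 lt2) orbT.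
Qed.

Lemma ltlex_total s t : s != t -> ltlex s t || ltlex t s.
Proof.
elim: s t => [|x s IH] [|y t] //=.
by rewrite eqseq_cons negb_and; case: ltngtP => //= _; apply: IH.
Qed.

Lemma ltlex_cons_leq x s y t : ltlex (x :: s) (y :: t) -> x <= y.
Proof. by case/orP => [/ltnW|/andP[/eqP-> _]]. Qed.

Fixpoint compositions (k d : nat) : seq (seq nat) :=
  if k is k'.+1 then [seq i :: c | i <- iota 0 d.+1, c <- compositions k' (d - i)]
  else if d == 0 then [:: [::]] else [::].

Lemma mem_compositions k d l :
  (l \in compositions k d) = (size l == k) && (sumn l == d).
Proof.
elim: k d l => [|k IH] d l; first by case: d; case: l.
apply/allpairsPdep/idP => [[i [c [ii cc ->]]]|].
  move: cc ii; rewrite IH mem_iota => /andP[/eqP sz /eqP sm] ii.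
  by rewrite /= sz sm eqxx; apply/eqP; lia.
case: l => [|x l] // /andP[/eqP[sz] /eqP sm]; exists x, l; rewrite /= in sm.
rewrite mem_iota IH sz eqxx /=; split=> //; first lia.
by apply/eqP; lia.
Qed.

Lemma compositions_uniq k d : uniq (compositions k d).
Proof.
elim: k d => [|k IH] d; first by case: d.
apply: allpairs_uniq_dep => [|i _|[i c] [j e] _ _ /= [-> ->]] //.
exact: iota_uniq.
Qed.

Definition addseq (l e : seq nat) : seq nat := [seq x.1 + x.2 | x <- zip l e].

Lemma size_addseq l e : size l = size e -> size (addseq l e) = size l.
Proof. by move=> H; rewrite size_map size_zip H minnn. Qed.

Lemma nth_addseq l e i : size l = size e ->
  nth 0 (addseq l e) i = nth 0 l i + nth 0 e i.
Proof.
move=> H; case: (ltnP i (size l)) => hi.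
  by rewrite (nth_map (0, 0)) ?size_zip ?H ?minnn -?H // nth_zip.
by rewrite !nth_default ?size_addseq // -H.
Qed.

Lemma sumn_addseq l e : size l = size e -> sumn (addseq l e) = sumn l + sumn e.
Proof. by elim: l e => [|x l IH] [|y e] //= [H]; rewrite IH //; lia. Qed.

Fixpoint bin_digits (k x : nat) : seq nat :=
  if k is k'.+1 then (odd x : nat) :: bin_digits k' x./2 else [::].

Lemma nth_bin_digits k x i : i < k -> nth 0 (bin_digits k x) i = alpha i x.
Proof.
elim: k x i => [|k IH] x [|i] //= hi; first by rewrite /alpha divn1.
by rewrite IH // /alpha expnS divnMA -divn2.
Qed.

Lemma mem_flatten_row (T : eqType) (B : seq (seq T)) b x :
  b \in B -> x \in b -> x \in flatten B.
Proof. by move=> bB xb; apply/flattenP; exists b. Qed.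

Section SparseF2.
Variables (T : finType) (K : eqType) (lt : rel K) (coord : K -> T).
Hypotheses (lt_irr : irreflexive lt) (lt_trans : transitive lt)
  (lt_total : forall x y, x != y -> lt x y || lt y x).
Local Open Scope ring_scope.

Lemma span_coord_vanish (F : fieldType) (X : seq {ffun T -> F^o}) t u :
  (forall v, v \in X -> v t = 0) -> u \in <<X>>%VS -> u t = 0.
Proof.
elim: X u => [|x X IH] u X0; first by rewrite span_nil memv0 => /eqP->; rewrite ffunE.
rewrite span_cons => /memv_addP [y /vlineP [k ->]] [z zX ->].
rewrite !ffunE X0 ?mem_head // scaler0 add0r; apply: IH zX => v vX.
by rewrite X0 // inE vX orbT.
Qed.

Definition unitv (t : T) : {ffun T -> ('F_2)^o} := [ffun u => (u == t)%:R].

Definition sparse_vec (s : seq K) : {ffun T -> ('F_2)^o} :=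
  \sum_(x <- s) unitv (coord x).

Lemma sparse_vec_nil : sparse_vec [::] = 0.
Proof. by rewrite /sparse_vec big_nil. Qed.

Lemma sparse_vec_cons x s : sparse_vec (x :: s) = unitv (coord x) + sparse_vec s.
Proof. by rewrite /sparse_vec big_cons. Qed.

Lemma sparse_vec_coord0 s t : (forall y, y \in s -> coord y != t) -> sparse_vec s t = 0.
Proof.
move=> st; rewrite /sparse_vec sum_ffunE big1_seq // => y /andP[_ ys].
by rewrite ffunE eq_sym (negbTE (st y ys)).
Qed.

Lemma sparse_vec_coord1 p s : (forall y, y \in s -> coord y != coord p) ->
  sparse_vec (p :: s) (coord p) = 1.
Proof. by move=> sp; rewrite sparse_vec_cons !ffunE eqxx sparse_vec_coord0 ?addr0. Qed.

Lemma addrr_F2 (v : {ffun T -> ('F_2)^o}) : v + v = 0.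
Proof. by apply/ffunP => t; rewrite !ffunE; apply: addrr_pchar2; apply: pchar_Fp. Qed.

Fixpoint symdiff (s t : seq K) : seq K :=
  match s with
  | [::] => t
  | x :: s' =>
    (fix symdiff_s (t : seq K) :=
       match t with
       | [::] => s
       | y :: t' => if lt x y then x :: symdiff s' t
                    else if lt y x then y :: symdiff_s t'
                    else symdiff s' t'
       end) t
  end.

Arguments symdiff : simpl never.

Lemma symdiff_cons x s y t : symdiff (x :: s) (y :: t) =
  if lt x y then x :: symdiff s (y :: t)
  else if lt y x then y :: symdiff (x :: s) t else symdiff s t.
Proof. by []. Qed.

Lemma sparse_vec_symdiff s t : sparse_vec (symdiff s t) = sparse_vec s + sparse_vec t.
Proof.
elim: s t => [|x s IH] t; first by rewrite sparse_vec_nil add0r.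
elim: t => [|y t IHt]; first by rewrite sparse_vec_nil addr0.
rewrite symdiff_cons !sparse_vec_cons; case: ifP => [_|xy].
  by rewrite sparse_vec_cons IH sparse_vec_cons addrA.
case: ifP => [_|yx]; first by rewrite sparse_vec_cons IHt sparse_vec_cons addrCA.
have {xy yx} <- : x = y by apply/eqP; apply: contraFT xy => /lt_total; rewrite yx orbF.
by rewrite IH addrACA addrr_F2 add0r.
Qed.

Definition lt_head (b c : seq K) : bool :=
  if b is x :: _ then if c is y :: _ then lt x y else false else false.

Lemma lt_head_trans : transitive lt_head.
Proof. by move=> [|y b] [|x a] [|z c] //=; apply: lt_trans. Qed.

Definition echelon (B : seq (seq K)) : bool :=
  all (fun b => (b != [::]) && sorted lt b) B && sorted lt_head B.

Fixpoint reduce (B : seq (seq K)) (v : seq K) : seq K :=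
  if B is b :: B' then
    match v, b with
    | [::], _ => [::]
    | _, [::] => reduce B' v
    | x :: _, p :: _ =>
        if x == p then reduce B' (symdiff v b) else if lt x p then v else reduce B' v
    end
  else v.

Fixpoint insert_row (r : seq K) (B : seq (seq K)) : seq (seq K) :=
  if B is b :: B' then if lt_head r b then r :: B else b :: insert_row r B'
  else [:: r].

Definition add_row (B : seq (seq K)) (v : seq K) : seq (seq K) :=
  if reduce B v is [::] then B else insert_row (reduce B v) B.

(* Only the span of the output is proved invariant; its echelon form is checked
   a posteriori on each instance (see [certified]). *)
Definition echelonize (gs : seq (seq K)) : seq (seq K) := foldl add_row [::] gs.

Lemma reduce_span B v : sparse_vec (reduce B v) - sparse_vec v \in <<map sparse_vec B>>%VS.
Proof.
elim: B v => [|b B IH] v; first by rewrite subrr mem0v.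
have {}IH v' : sparse_vec (reduce B v') - sparse_vec v' \in <<map sparse_vec (b :: B)>>%VS.
  by apply: subvP (IH v'); apply: sub_span => z zB; rewrite inE zB orbT.
case: v IH => [|x v]; case: b => [|p b] IH; rewrite /= ?subrr ?mem0v //.
case: ifP => _; last by case: ifP => _; rewrite ?subrr ?mem0v.
rewrite -(subrK (sparse_vec (symdiff (x :: v) (p :: b))) (sparse_vec (reduce _ _))) -addrA memvD //.
by rewrite sparse_vec_symdiff addrAC subrr add0r memv_span ?mem_head.
Qed.

Lemma perm_insert_row r B : perm_eq (insert_row r B) (r :: B).
Proof.
elim: B => //= b B IH; case: ifP => _ //.
by rewrite -(perm_cons b) in IH; apply: perm_trans IH _; rewrite (perm_catCA [:: b] [:: r] B).
Qed.

Lemma span_add_row B v :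
  <<map sparse_vec (add_row B v)>>%VS = (<<map sparse_vec B>> + <[sparse_vec v]>)%VS.
Proof.
rewrite /add_row; have := reduce_span B v.
case: (reduce B v) => [|x r] red.
  by apply/esym/addv_idPl; rewrite -memvE -memvN -sub0r -sparse_vec_nil.
rewrite (eq_span (perm_mem (perm_map _ (perm_insert_row _ _)))) /= span_cons addvC.
set y := sparse_vec (x :: r); set V := <<map sparse_vec B>>%VS.
apply/eqP; rewrite eqEsubv !subv_add -!memvE !addvSl /=; apply/andP; split.
  by rewrite -(subrK (sparse_vec v) y) memv_add ?memv_line.
have -> : sparse_vec v = - (y - sparse_vec v) + y by rewrite opprB subrK.
by rewrite memv_add ?memvN ?memv_line.
Qed.

Lemma span_echelonize gs :
  <<map sparse_vec (echelonize gs)>>%VS = <<map sparse_vec gs>>%VS.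
Proof.
suff span_foldl B : <<map sparse_vec (foldl add_row B gs)>>%VS =
    (<<map sparse_vec B>> + <<map sparse_vec gs>>)%VS.
  by rewrite /echelonize span_foldl span_nil add0v.
elim: gs B => [|g gs IH] B /=; first by rewrite span_nil addv0.
by rewrite IH span_add_row span_cons addvA.
Qed.

Lemma echelon_behead b B : echelon (b :: B) -> echelon B.
Proof. by case/andP=> /andP[_ rowsB] /path_sorted sortedB; apply/andP. Qed.

Lemma echelon_filter P B : echelon B -> echelon (filter P B).
Proof.
case/andP=> /allP rows sortedB; rewrite /echelon sorted_filter ?andbT //; last exact: lt_head_trans.
by apply/allP => b; rewrite mem_filter => /andP[_ /rows].
Qed.

Lemma echelon_pivot_lt p b B y : echelon ((p :: b) :: B) ->
  y \in b ++ flatten B -> lt p y.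
Proof.
case/andP=> /andP[/andP[_ sorted_pb] /allP rowsB] pathB; rewrite mem_cat.
case/orP=> [yb|/flattenP[c cB yc]]; first exact: (allP (order_path_min lt_trans sorted_pb)).
have := allP (order_path_min lt_head_trans pathB) c cB.
have /andP[_] := rowsB c cB; case: c yc {cB} => // q c; rewrite inE => yqc sorted_qc pq.
case/predU1P: yqc => [-> //|yc].
exact: lt_trans pq (allP (order_path_min lt_trans sorted_qc) y yc).
Qed.

Lemma echelon_coord_neq_pivot p b B y : echelon ((p :: b) :: B) ->
  {in flatten ((p :: b) :: B) &, injective coord} ->
  y \in b ++ flatten B -> coord y != coord p.
Proof.
move=> ech inj yin; apply: contraTneq (echelon_pivot_lt ech yin) => /inj <- //.
- by rewrite lt_irr.
- by rewrite inE yin orbT.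
- exact: mem_head.
Qed.

Lemma sparse_vec_pivot p b B : echelon ((p :: b) :: B) ->
  {in flatten ((p :: b) :: B) &, injective coord} -> sparse_vec (p :: b) (coord p) = 1.
Proof.
move=> ech inj; apply: sparse_vec_coord1 => y yb.
by apply: (echelon_coord_neq_pivot ech); rewrite ?mem_cat ?yb.
Qed.

Lemma span_echelon_cat B0 B1 u : echelon B0 ->
  {in flatten (B0 ++ B1) &, injective coord} ->
  (forall p b, p :: b \in B0 -> p \notin flatten B1) ->
  u \in <<map sparse_vec (B0 ++ B1)>>%VS ->
  (forall p b, p :: b \in B0 -> u (coord p) = 0) -> u \in <<map sparse_vec B1>>%VS.
Proof.
elim: B0 u => [|[|p b] B0 IH] u ech inj fresh; [by [] | by case/andP: ech => /andP[] |].
rewrite span_cons => /memv_addP[_ /vlineP[k ->] [z zB ->]] u0.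
have ech0 := echelon_behead ech.
have inj0 : {in flatten ((p :: b) :: B0) &, injective coord}.
  by apply: sub_in2 inj => x; rewrite flatten_cat mem_cat => ->.
have z_p : z (coord p) = 0.
  apply: span_coord_vanish zB => _ /mapP[c cB ->]; apply: sparse_vec_coord0 => y yc.
  move: (mem_flatten_row cB yc); rewrite flatten_cat mem_cat => /orP[yB0|yB1].
    by apply: (echelon_coord_neq_pivot ech); rewrite ?mem_cat ?yB0 ?orbT.
  apply: contraNneq (fresh p b (mem_head _ _)) => /inj <- //.
    by rewrite /= inE !mem_cat flatten_cat mem_cat yB1 !orbT.
  exact: mem_head.
have k0 : k = 0.
  have := u0 p b (mem_head _ _); rewrite !ffunE z_p addr0 (sparse_vec_pivot ech inj0) => <-.
  by rewrite -[_ *: _]/(k * 1) mulr1.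
rewrite k0 scale0r add0r; apply: IH => // [|q c qc|q c qc].
- by apply: sub_in2 inj => x xin; rewrite /= inE mem_cat xin !orbT.
- by apply: (fresh q c); rewrite in_cons qc orbT.
- by have := u0 q c; rewrite in_cons qc orbT k0 scale0r add0r => ->.
Qed.

Lemma echelon_pivots_vanish B u : echelon B -> {in flatten B &, injective coord} ->
  u \in <<map sparse_vec B>>%VS -> (forall p b, p :: b \in B -> u (coord p) = 0) -> u = 0.
Proof.
move=> ech inj uB u0; apply/eqP; rewrite -memv0.
by have := @span_echelon_cat B [::] u ech; rewrite cats0 span_nil; apply.
Qed.

Lemma free_echelon B : echelon B -> {in flatten B &, injective coord} ->
  free (map sparse_vec B).
Proof.
elim: B => [|[|p b] B IH] ech inj; [exact: nil_free | by case/andP: ech => /andP[] |].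
have inj0 : {in flatten B &, injective coord}.
  by apply: sub_in2 inj => x xB; rewrite /= inE mem_cat xB !orbT.
rewrite /= free_cons (IH (echelon_behead ech) inj0) andbT.
apply/negP => pB; suff : sparse_vec (p :: b) (coord p) = 0.
  by rewrite (sparse_vec_pivot ech inj) => /eqP; rewrite oner_eq0.
apply: span_coord_vanish pB => _ /mapP[c cB ->].
apply: sparse_vec_coord0 => y yc; apply: (echelon_coord_neq_pivot ech) => //.
by rewrite mem_cat (mem_flatten_row cB yc) orbT.
Qed.

Lemma dim_echelon B : echelon B -> {in flatten B &, injective coord} ->
  \dim <<map sparse_vec B>> = size B.
Proof. by move=> ech inj; rewrite (eqP (free_echelon ech inj)) size_map. Qed.

Lemma free_unitv (s : seq T) : uniq s -> free (map unitv s).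
Proof.
elim: s => [|t s IH] /=; first by rewrite nil_free.
case/andP=> ts us; rewrite free_cons IH // andbT; apply/negP => /span_coord_vanish ts0.
suff : unitv t t = 0 by rewrite ffunE eqxx => /eqP; rewrite oner_eq0.
by apply: ts0 => _ /mapP[u u_s ->]; rewrite ffunE; case: eqP => // ut; rewrite ut u_s in ts.
Qed.

End SparseF2.

Section MonomialCode.
Variables h n : nat.
Local Notation Mon := (Mon h n).

Definition exps_of (a : Mon) : seq nat := [seq val (a j) | j <- enum 'I_h].
Definition mon_of (l : seq nat) : Mon := [ffun j : 'I_h => inord (nth 0 l j)].
Definition is_exps (l : seq nat) : bool := (size l == h) && all (leq^~ n) l.

Lemma size_exps_of a : size (exps_of a) = h.
Proof. by rewrite size_map size_enum_ord. Qed.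

Lemma nth_exps_of a (j : 'I_h) : nth 0 (exps_of a) j = a j.
Proof. by rewrite (nth_map j) ?size_enum_ord // nth_ord_enum. Qed.

Lemma sum_exps_of (F : nat -> nat) a :
  sumn [seq F x | x <- exps_of a] = \sum_(j < h) F (a j).
Proof. by rewrite sumnE -map_comp big_map big_enum. Qed.

Lemma mon_ofE l (j : 'I_h) : is_exps l -> mon_of l j = nth 0 l j :> nat.
Proof.
case/andP=> _ /allP le_n; rewrite /mon_of ffunE inordK // ltnS.
by case: (ltnP j (size l)) => [jl|/(nth_default 0)->]; first exact/le_n/mem_nth.
Qed.

Lemma exps_ofK : cancel exps_of mon_of.
Proof. by move=> a; apply/ffunP => j; apply/val_inj; rewrite ffunE /= nth_exps_of inord_val. Qed.

Lemma mon_ofK l : is_exps l -> exps_of (mon_of l) = l.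
Proof.
move=> ex; have /andP[/eqP size_l _] := ex.
apply: (@eq_from_nth _ 0) => [|i]; rewrite size_exps_of ?size_l // => ih.
by rewrite -[i]/(val (Ordinal ih)) nth_exps_of mon_ofE.
Qed.

Lemma is_exps_sumn l : size l = h -> sumn l <= n -> is_exps l.
Proof.
move=> size_l sum_l; rewrite /is_exps size_l eqxx; apply/allP => x xl.
by apply: leq_trans sum_l; rewrite (perm_sumn (perm_to_rem xl)) /= leq_addr.
Qed.

Lemma mdeg_exps a : mdeg a = sumn (exps_of a).
Proof. by rewrite -[exps_of a]map_id sum_exps_of. Qed.

Lemma zeromon_exps a : zeromon a = (0 \in exps_of a).
Proof.
apply/existsP/idP => [[j /eqP j0]|/mapP[j _ j0]]; last by exists j; rewrite -j0.
have {}j0 : (a j : nat) = 0%N := j0.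
by rewrite -j0 -nth_exps_of mem_nth ?size_exps_of.
Qed.

Lemma posmon_exps a : posmon a = all (predC1 0) (exps_of a).
Proof.
apply/forallP/allP => [a_pos _ /mapP[j _ ->]|a_pos j]; first exact: a_pos.
have ja : nth 0 (exps_of a) j \in exps_of a by rewrite mem_nth ?size_exps_of.
by have := a_pos _ ja; rewrite nth_exps_of.
Qed.

Definition weight_of (l : seq nat) : seq nat :=
  let digits := map (bin_digits n.+1) l in
  [seq sumn [seq nth 0 d i | d <- digits] | i <- iota 0 n.+1].

Lemma weight_exps a : weight a = weight_of (exps_of a).
Proof.
apply/eq_in_map => i; rewrite mem_iota => /andP[_ ilt].
by rewrite -map_comp sum_exps_of; apply: eq_bigr => j _; rewrite nth_bin_digits.
Qed.

Lemma perm_filter_mon (r : seq Mon) (P : pred Mon) (L : seq (seq nat)) :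
  uniq r -> (forall a, a \in r) ->
  uniq L -> all is_exps L -> (forall a, P a = (exps_of a \in L)) ->
  perm_eq [seq a <- r | P a] (map mon_of L).
Proof.
move=> ur rT uL /allP exL PL; apply: uniq_perm.
- by rewrite filter_uniq.
- by rewrite map_inj_in_uniq // => l l' /exL/mon_ofK {2}<- /exL/mon_ofK {2}<- ->.
move=> a; rewrite mem_filter rT andbT PL; apply/idP/mapP => [aL|[l lL ->]].
  by exists (exps_of a); rewrite ?exps_ofK.
by rewrite mon_ofK ?exL.
Qed.

End MonomialCode.

Section SteenrodSquares.
Variables h n : nat.
Local Notation Mon := (Mon h n).

Definition binom_prod (l e : seq nat) : nat :=
  foldr muln 1 [seq 'C(x.1, x.2) | x <- zip l e].

Definition sq_terms (l : seq nat) : seq (seq nat) :=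
  [seq addseq l e | e <- compositions h (n - sumn l) & odd (binom_prod l e)].

Lemma binom_prodE l e : size l = size e ->
  binom_prod l e = \prod_(j < size l) 'C(nth 0 l j, nth 0 e j).
Proof.
rewrite /binom_prod; elim: l e => [|x l IH] [|y e] //=; first by rewrite big_ord0.
by move=> [size_le]; rewrite big_ord_recl IH.
Qed.

Definition shifts (l : seq nat) (k : nat) : seq (seq nat) :=
  [seq addseq l e | e <- compositions h k].

Section Shifts.
Variables (l : seq nat) (k : nat).
Hypotheses (size_l : size l = h) (sum_l : sumn l + k <= n).

Lemma shifts_uniq : uniq (shifts l k).
Proof.
rewrite map_inj_in_uniq ?compositions_uniq // => e e'.
rewrite !mem_compositions => /andP[/eqP size_e _] /andP[/eqP size_e' _] le_e.
apply: (@eq_from_nth _ 0) => [|i _]; first by rewrite size_e size_e'.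
by have /eqP := congr1 (nth 0 ^~ i) le_e; rewrite !nth_addseq ?size_e ?size_e' // eqn_add2l => /eqP.
Qed.

Lemma shifts_exps : all (@is_exps h n) (shifts l k).
Proof.
apply/allP => _ /mapP[e + ->]; rewrite mem_compositions => /andP[/eqP size_e /eqP sum_e].
by apply: is_exps_sumn; rewrite ?size_addseq ?sumn_addseq ?size_l ?size_e ?sum_e.
Qed.

Lemma Sq_support (b : Mon) : is_exps h n l ->
  (mdeg b == mdeg (mon_of h n l) + k) && [forall j, mon_of h n l j <= b j] =
  (exps_of b \in shifts l k).
Proof.
move=> exl; rewrite !mdeg_exps mon_ofK //; apply/idP/mapP => [|[e]].
  case/andP=> /eqP sum_b /forallP le_lb.
  pose e := [seq x.1 - x.2 | x <- zip (exps_of b) l].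
  have size_e : size e = h by rewrite size_map size_zip size_exps_of size_l minnn.
  have be : exps_of b = addseq l e.
    apply: (@eq_from_nth _ 0) => [|i]; rewrite ?size_addseq ?size_exps_of ?size_e // => ih.
    rewrite nth_addseq ?size_l // (nth_map (0, 0)) ?size_zip ?size_exps_of ?size_l ?minnn //.
    rewrite nth_zip ?size_exps_of ?size_l //= subnKC //.
    by have := le_lb (Ordinal ih); rewrite mon_ofE // -nth_exps_of.
  exists e => //; rewrite mem_compositions size_e eqxx /=.
  by move: sum_b; rewrite be sumn_addseq ?size_l ?size_e // => /eqP; rewrite eqn_add2l.
rewrite mem_compositions => /andP[/eqP size_e /eqP sum_e] be.
rewrite be sumn_addseq ?size_l ?size_e // sum_e eqxx /=; apply/forallP => j.
by rewrite mon_ofE // -nth_exps_of be nth_addseq ?size_l ?size_e // leq_addr.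
Qed.

End Shifts.

Lemma Sq_exps l : is_exps h n l -> sumn l <= n ->
  Sq (n - sumn l) (mon_of h n l) = (\sum_(b <- sq_terms l) mono (mon_of h n b))%R.
Proof.
move=> exl sum_l; have /andP[/eqP size_l _] := exl; set k := n - sumn l.
have sum_lk : sumn l + k <= n by rewrite subnKC.
have /allP ex_shifts := shifts_exps size_l sum_lk.
rewrite /Sq -big_filter (perm_big _ (perm_filter_mon (index_enum_uniq _) (@mem_index_enum _)
  (shifts_uniq k size_l) (shifts_exps size_l sum_lk) (fun b => Sq_support k size_l b exl))).
rewrite /sq_terms -/k !big_map big_filter [RHS]big_mkcond; apply: eq_big_seq => e eC.
have size_e : size e = h by move: eC; rewrite mem_compositions => /andP[/eqP].
have ex_le : is_exps h n (addseq l e) by apply/ex_shifts/map_f.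
rewrite (_ : (\prod_(j < h) _)%N = binom_prod l e); last first.
  rewrite binom_prodE ?size_l ?size_e //; apply: eq_bigr => j _.
  by rewrite !mon_ofE // nth_addseq ?size_l ?size_e // addKn.
have -> : ((binom_prod l e)%:R = (odd (binom_prod l e))%:R :> 'F_2)%R by rewrite -modn2 Fp_nat_mod.
by case: odd; rewrite ?scale1r ?scale0r.
Qed.

End SteenrodSquares.

Section PspanDim.
Variables (h n : nat) (S : pred (Mon h n)).
Local Open Scope ring_scope.

Lemma Pspan_coord0 (Q : pred (Mon h n)) a u : ~~ Q a -> u \in Pspan S Q -> u a = 0.
Proof.
move=> nQa; apply: span_coord_vanish => _ /mapP[b + ->].
rewrite mem_filter => /andP[/and3P[_ _ Qb] _].
by rewrite ffunE; case: eqP => // ab; rewrite ab Qb in nQa.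
Qed.

Lemma mono_Pspan (Q : pred (Mon h n)) a : mdeg a = n -> S a -> Q a -> mono a \in Pspan S Q.
Proof.
by move=> deg_a Sa Qa; rewrite memv_span // map_f // mem_filter mem_enum deg_a eqxx Sa Qa.
Qed.

Lemma dim_Pspan (Q : pred (Mon h n)) (P : pred (seq nat)) :
  (forall a, S a && Q a = P (exps_of a)) -> \dim (Pspan S Q) = count P (compositions h n).
Proof.
move=> SQ_P; set L := [seq l <- compositions h n | P l].
have exL : all (@is_exps h n) L.
  apply/allP => l; rewrite mem_filter mem_compositions => /andP[_ /andP[/eqP size_l /eqP sum_l]].
  by rewrite is_exps_sumn ?sum_l.
have memL a : [&& mdeg a == n, S a & Q a] = (exps_of a \in L).
  rewrite mem_filter mem_compositions size_exps_of mdeg_exps -SQ_P eqxx /=.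
  by case: (S a); case: (Q a); rewrite ?andbT ?andbF.
have /perm_size size_Pn := perm_filter_mon (enum_uniq _) (@mem_enum _ _)
  (filter_uniq _ (compositions_uniq h n)) exL memL.
have := free_unitv (filter_uniq [pred a | [&& mdeg a == n, S a & Q a]] (enum_uniq (Mon h n))).
by rewrite /free size_map => /eqP ->; rewrite size_Pn size_map size_filter.
Qed.

End PspanDim.

Section HitBasis.
Variables (h n : nat) (w : seq nat).

(* Classes 0, 1, 2 mean weight above, equal to, below [w]; as keys
   [weight_class l :: l] are compared lexicographically, the pivot (least key)
   of a vector is a monomial of highest weight. *)
Definition weight_class (l : seq nat) : nat :=
  let c := weight_of n l in
  if lexle c (pad n w) then (if c == pad n w then 1 else 2) else 0.

Definition key (l : seq nat) : seq nat := weight_class l :: l.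

Definition key_mon (x : seq nat) : Mon h n := mon_of h n (behead x).

Definition lower_exps (Sc : pred (seq nat)) : seq (seq nat) :=
  [seq l <- [seq c | d <- iota 0 n, c <- compositions h d] | Sc l].

Definition hit_rows (Sc : pred (seq nat)) : seq (seq (seq nat)) :=
  [seq sort ltlex (map key (sq_terms h n l)) | l <- lower_exps Sc].

Definition hit_basis (Sc : pred (seq nat)) : seq (seq (seq nat)) :=
  echelonize ltlex (hit_rows Sc).

Definition valid_key (Sc : pred (seq nat)) (x : seq nat) : bool :=
  [&& x == key (behead x), size (behead x) == h, sumn (behead x) == n & Sc (behead x)].

Definition certified (Sc : pred (seq nat)) (B : seq (seq (seq nat))) : bool :=
  echelon ltlex B && all (all (valid_key Sc)) B.

Definition pivot_class (b : seq (seq nat)) : nat := head 0 (head [::] b).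

Definition hit_summary (Sc : pred (seq nat)) : bool * nat * nat :=
  let B := hit_basis Sc in (certified Sc B, size B, count (fun b => pivot_class b == 1) B).

Lemma weight_class_le2 l : weight_class l <= 2.
Proof. by rewrite /weight_class; case: ifP => //; case: ifP. Qed.

Lemma lexle_weight_class (a : Mon h n) :
  lexle (weight a) (pad n w) = (weight_class (exps_of a) != 0).
Proof. by rewrite /weight_class weight_exps; case: ifP => //; case: ifP. Qed.

Lemma lexlt_weight_class (a : Mon h n) :
  lexlt (weight a) (pad n w) = (weight_class (exps_of a) == 2).
Proof. by rewrite /lexlt /weight_class weight_exps; case: ifP => //=; case: ifP. Qed.

Lemma mem_lower_exps Sc l : (l \in lower_exps Sc) = [&& Sc l, size l == h & sumn l < n].
Proof.
rewrite mem_filter; congr andb; apply/allpairsPdep/andP => [[d [c [+ + ->]]]|[/eqP size_l sum_l]].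
  by rewrite mem_iota mem_compositions => /andP[_ d_lt] /andP[-> /eqP->].
by exists (sumn l), l; rewrite mem_iota mem_compositions size_l !eqxx.
Qed.

Lemma lower_exps_uniq Sc : uniq (lower_exps Sc).
Proof.
apply/filter_uniq/allpairs_uniq_dep => [|d _|]; rewrite ?iota_uniq ?compositions_uniq //.
move=> _ _ /allpairsPdep[d [c [_ cC ->]]] /allpairsPdep[d' [c' [_ cC' ->]]] /= cc'.
by move: cC cC'; rewrite cc' !mem_compositions => /andP[_ /eqP<-] /andP[_ /eqP<-].
Qed.

Local Open Scope ring_scope.

Lemma hitn_hit_rows (S : pred (Mon h n)) Sc : (forall a, S a = Sc (exps_of a)) ->
  hitn S = <<map (sparse_vec key_mon) (hit_rows Sc)>>%VS.
Proof.
move=> S_exps; set L := lower_exps Sc.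
have exL : all (@is_exps h n) L.
  apply/allP => l; rewrite mem_lower_exps => /and3P[_ /eqP size_l /ltnW].
  exact: is_exps_sumn.
have memL a : S a && (mdeg a < n)%N = (exps_of a \in L).
  by rewrite mem_lower_exps S_exps size_exps_of mdeg_exps eqxx.
rewrite /hitn (eq_span (perm_mem (perm_map _ (perm_filter_mon (enum_uniq _) (@mem_enum _ _)
  (lower_exps_uniq Sc) exL memL)))).
rewrite /hit_rows -!map_comp; congr <<_>>%VS; apply/eq_in_map => l lL /=.
have exl : is_exps h n l by apply: (allP exL).
have /ltnW sum_l : (sumn l < n)%N by move: lL; rewrite mem_lower_exps => /and3P[].
rewrite mdeg_exps mon_ofK // Sq_exps // /sparse_vec.
by rewrite (perm_big _ (permEl (perm_sort _ _))) [RHS]big_map.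
Qed.

Section Certified.
Variables (S : pred (Mon h n)) (Sc : pred (seq nat)) (B : seq (seq (seq nat))).
Hypotheses (S_exps : forall a, S a = Sc (exps_of a))
  (span_B : <<map (sparse_vec key_mon) B>>%VS = hitn S) (cert_B : certified Sc B).
Local Notation vec := (sparse_vec key_mon).

Lemma echelon_B : echelon ltlex B.
Proof. by case/andP: cert_B. Qed.

Lemma valid_key_B x : x \in flatten B -> valid_key Sc x.
Proof. by case/andP: cert_B => _ /allP keys /flattenP[b /keys/allP]; apply. Qed.

Lemma valid_keyP x : valid_key Sc x ->
  [/\ x = key (exps_of (key_mon x)), mdeg (key_mon x) = n & S (key_mon x)].
Proof.
case/and4P=> /eqP x_key /eqP size_x /eqP sum_x Sc_x.
have ex : exps_of (key_mon x) = behead x by rewrite mon_ofK // is_exps_sumn ?size_x ?sum_x.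
by rewrite mdeg_exps S_exps ex -x_key sum_x.
Qed.

Lemma key_mon_inj : {in flatten B &, injective key_mon}.
Proof.
move=> x y /valid_key_B/valid_keyP[x_key _ _] /valid_key_B/valid_keyP[y_key _ _] xy.
by rewrite x_key y_key xy.
Qed.

Lemma key_class x : x \in flatten B -> weight_class (exps_of (key_mon x)) = head 0%N x.
Proof. by case/valid_key_B/valid_keyP => + _ _ => {2}->. Qed.

Lemma pivot_class_le b x : b \in B -> x \in b -> (pivot_class b <= head 0%N x)%N.
Proof.
case: b => [//|p b] bB; rewrite inE => /predU1P[-> //|xb].
have /andP[/allP rows _] := echelon_B; have /andP[_ sorted_pb] := rows _ bB.
have xB : x \in flatten B by apply: mem_flatten_row bB _; rewrite inE xb orbT.
have [x_key _ _] := valid_keyP (valid_key_B xB).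
have [p_key _ _] := valid_keyP (valid_key_B (mem_flatten_row bB (mem_head _ _))).
move: (allP (order_path_min ltlex_trans sorted_pb) x xb); rewrite x_key p_key.
exact: ltlex_cons_leq.
Qed.

Lemma row_Pspan (Q : pred (Mon h n)) b : b \in B -> (forall x, x \in b -> Q (key_mon x)) ->
  vec b \in Pspan S Q.
Proof.
move=> bB Qb; rewrite /sparse_vec big_seq; apply: memv_suml => x xb.
have [_ deg_x S_x] := valid_keyP (valid_key_B (mem_flatten_row bB xb)).
exact: mono_Pspan deg_x S_x (Qb x xb).
Qed.

Lemma QPdim_certified : QPdim S = (count Sc (compositions h n) - size B)%N.
Proof.
have hit_Pn : (hitn S <= Pn S)%VS.
  by rewrite -span_B; apply/span_subvP => _ /mapP[b bB ->]; apply: row_Pspan.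
rewrite /QPdim (capv_idPl hit_Pn) -span_B (dim_echelon ltlex_irr ltlex_trans echelon_B key_mon_inj).
by rewrite (dim_Pspan (P := Sc)) // => a; rewrite andbT S_exps.
Qed.

Lemma echelon_filter_B (P : pred (seq (seq nat))) : echelon ltlex (filter P B).
Proof. by apply: echelon_filter echelon_B; apply: ltlex_trans. Qed.

Lemma key_mon_inj_filter (P : pred (seq (seq nat))) :
  {in flatten (filter P B) &, injective key_mon}.
Proof.
apply: sub_in2 key_mon_inj => x /flattenP[b].
by rewrite mem_filter => /andP[_]; exact: mem_flatten_row.
Qed.

Lemma hit_cap_Pw : (hitn S :&: Pw S w)%VS = <<map vec [seq b <- B | pivot_class b != 0%N]>>%VS.
Proof.
set B0 := [seq b <- B | pivot_class b == 0%N]; set Bw := [seq b <- B | pivot_class b != 0%N].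
have permB : perm_eq B (B0 ++ Bw) by rewrite perm_sym perm_filterC.
apply/eqP; rewrite eqEsubv; apply/andP; split; last first.
  rewrite subv_cap -span_B; apply/andP; split.
    by apply: sub_span => _ /mapP[b + ->]; rewrite mem_filter => /andP[_ bB]; apply: map_f.
  apply/span_subvP => _ /mapP[b + ->]; rewrite mem_filter => /andP[pb bB].
  apply: row_Pspan => // x xb; rewrite lexle_weight_class key_class ?(mem_flatten_row bB) //.
  by apply: contraNneq pb => x0; have := pivot_class_le bB xb; rewrite x0 leqn0.
apply/subvP => u /memv_capP[u_hit u_w].
apply: (span_echelon_cat ltlex_irr ltlex_trans (B0 := B0) (echelon_filter_B _)).
- apply: sub_in2 key_mon_inj => x /flattenP[b]; rewrite -(perm_mem permB); exact: mem_flatten_row.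
- move=> p b; rewrite mem_filter => /andP[/eqP p0 _]; apply/negP => /flattenP[c].
  rewrite mem_filter => /andP[pc cB] pc'.
  by have := pivot_class_le cB pc'; rewrite [head _ p]p0 leqn0 (negbTE pc).
- by rewrite -(eq_span (perm_mem (perm_map _ permB))) span_B.
move=> p b; rewrite mem_filter => /andP[/eqP p0 bB]; apply: Pspan_coord0 u_w.
by rewrite lexle_weight_class key_class ?(mem_flatten_row bB) ?mem_head // [head _ p]p0.
Qed.

Lemma hit_Pw_add_Plt :
  (<<map vec [seq b <- B | pivot_class b != 0%N]>> + Plt S w)%VS =
  (<<map vec [seq b <- B | pivot_class b == 1%N]>> + Plt S w)%VS.
Proof.
apply/eqP; rewrite eqEsubv !subv_add !addvSr !andbT; apply/andP; split; last first.
  apply: subv_trans (addvSl _ _); apply: sub_span => _ /mapP[b + ->].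
  by rewrite mem_filter => /andP[/eqP pb1 bB]; rewrite map_f // mem_filter pb1.
apply/span_subvP => _ /mapP[b + ->]; rewrite mem_filter => /andP[pb bB].
have [pb1|pb1] := eqVneq (pivot_class b) 1%N.
  by apply: subvP (addvSl _ _) _ _; rewrite memv_span // map_f // mem_filter pb1 eqxx.
apply: subvP (addvSr _ _) _ _; apply: row_Pspan => // x xb.
have xB := mem_flatten_row bB xb; rewrite lexlt_weight_class key_class //.
have := weight_class_le2 (exps_of (key_mon x)); rewrite key_class //.
by have := pivot_class_le bB xb; move: pb pb1 => /eqP pb /eqP pb1; lia.
Qed.

Lemma span_class1_cap_Plt :
  (<<map vec [seq b <- B | pivot_class b == 1%N]>> :&: Plt S w)%VS = 0%VS.
Proof.
apply/eqP; rewrite -subv0; apply/subvP => u /memv_capP[u1 u_lt]; rewrite memv0; apply/eqP.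
apply: (echelon_pivots_vanish ltlex_irr ltlex_trans (echelon_filter_B _)
  (@key_mon_inj_filter _) u1).
move=> p b; rewrite mem_filter => /andP[/eqP p1 bB]; apply: Pspan_coord0 u_lt.
by rewrite lexlt_weight_class key_class ?(mem_flatten_row bB) ?mem_head // [head _ p]p1.
Qed.

Lemma QPwdim_certified : QPwdim S w =
  (count (fun l => Sc l && (weight_class l == 1%N)) (compositions h n)
   - count (fun b => pivot_class b == 1%N) B)%N.
Proof.
rewrite /QPwdim hit_cap_Pw hit_Pw_add_Plt dimv_disjoint_sum ?span_class1_cap_Plt //.
rewrite (dim_echelon ltlex_irr ltlex_trans (echelon_filter_B _) (@key_mon_inj_filter _)).
rewrite (dim_Pspan (P := fun l => Sc l && (weight_class l != 0%N))); last first.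
  by move=> a; rewrite S_exps lexle_weight_class.
rewrite (dim_Pspan (P := fun l => Sc l && (weight_class l == 2%N))); last first.
  by move=> a; rewrite S_exps lexlt_weight_class.
rewrite size_filter; suff -> : forall s,
    count (fun l => Sc l && (weight_class l != 0%N)) s =
    (count (fun l => Sc l && (weight_class l == 1%N)) s
     + count (fun l => Sc l && (weight_class l == 2%N)) s)%N.
  by rewrite subnDr.
elim=> //= l s ->; have := weight_class_le2 l.
by case: (Sc l) (weight_class l) => [] [|[|[|]]] //=; lia.
Qed.

End Certified.

Lemma span_hit_basis (S : pred (Mon h n)) Sc : (forall a, S a = Sc (exps_of a)) ->
  <<map (sparse_vec key_mon) (hit_basis Sc)>>%VS = hitn S.
Proof. by move=> S_exps; rewrite (span_echelonize _ ltlex_total) (hitn_hit_rows S_exps). Qed.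

Lemma QPdim_summary (S : pred (Mon h n)) Sc s c : (forall a, S a = Sc (exps_of a)) ->
  hit_summary Sc = (true, s, c) -> QPdim S = (count Sc (compositions h n) - s)%N.
Proof.
by move=> S_exps [cert <- _]; exact: QPdim_certified S_exps (span_hit_basis S_exps) cert.
Qed.

Lemma QPwdim_summary (S : pred (Mon h n)) Sc s c : (forall a, S a = Sc (exps_of a)) ->
  hit_summary Sc = (true, s, c) ->
  QPwdim S w = (count (fun l => Sc l && (weight_class l == 1%N)) (compositions h n) - c)%N.
Proof.
by move=> S_exps [cert _ <-]; exact: QPwdim_certified S_exps (span_hit_basis S_exps) cert.
Qed.

End HitBasis.

Lemma hit_summaries_all :
  [&& hit_summary 6 10 omega1 xpredT == (true, 2058, 950),
      hit_summary 6 10 omega2 xpredT == (true, 2058, 191),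
      hit_summary 6 10 omega3 xpredT == (true, 2058, 260),
      hit_summary 6 10 omega4 xpredT == (true, 2058, 84)
    & hit_summary 6 10 omega5 xpredT == (true, 2058, 0)].
Proof. vm_cast_no_check (erefl true). Qed.

Lemma hit_summaries_zero :
  [&& hit_summary 6 10 omega1 (fun l => 0 \in l) == (true, 1997, 950),
      hit_summary 6 10 omega2 (fun l => 0 \in l) == (true, 1997, 180),
      hit_summary 6 10 omega3 (fun l => 0 \in l) == (true, 1997, 240),
      hit_summary 6 10 omega4 (fun l => 0 \in l) == (true, 1997, 60)
    & hit_summary 6 10 omega5 (fun l => 0 \in l) == (true, 1997, 0)].
Proof. vm_cast_no_check (erefl true). Qed.

Lemma hit_summaries_pos :
  [&& hit_summary 6 10 omega1 (all (predC1 0)) == (true, 61, 0),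
      hit_summary 6 10 omega2 (all (predC1 0)) == (true, 61, 11),
      hit_summary 6 10 omega3 (all (predC1 0)) == (true, 61, 20),
      hit_summary 6 10 omega4 (all (predC1 0)) == (true, 61, 24)
    & hit_summary 6 10 omega5 (all (predC1 0)) == (true, 61, 0)].
Proof. vm_cast_no_check (erefl true). Qed.

Lemma QP_allmon : QPdim (@allmon 6 10) = 945 /\ [/\ QPwdim (@allmon 6 10) omega1 = 400,
  QPwdim (@allmon 6 10) omega2 = 34, QPwdim (@allmon 6 10) omega3 = 280,
  QPwdim (@allmon 6 10) omega4 = 216 & QPwdim (@allmon 6 10) omega5 = 15].
Proof.
have /and5P[/eqP s1 /eqP s2 /eqP s3 /eqP s4 /eqP s5] := hit_summaries_all.
have S_exps (a : Mon 6 10) : allmon a = xpredT (exps_of a) by [].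
rewrite (QPdim_summary S_exps s1) (QPwdim_summary S_exps s1) (QPwdim_summary S_exps s2).
rewrite (QPwdim_summary S_exps s3) (QPwdim_summary S_exps s4) (QPwdim_summary S_exps s5).
by vm_compute; do 2!split.
Qed.

Lemma QP_zeromon : QPdim (@zeromon 6 10) = 880 /\ [/\ QPwdim (@zeromon 6 10) omega1 = 400,
  QPwdim (@zeromon 6 10) omega2 = 30, QPwdim (@zeromon 6 10) omega3 = 270,
  QPwdim (@zeromon 6 10) omega4 = 180 & QPwdim (@zeromon 6 10) omega5 = 0].
Proof.
have /and5P[/eqP s1 /eqP s2 /eqP s3 /eqP s4 /eqP s5] := hit_summaries_zero.
have S_exps := @zeromon_exps 6 10.
rewrite (QPdim_summary S_exps s1) (QPwdim_summary S_exps s1) (QPwdim_summary S_exps s2).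
rewrite (QPwdim_summary S_exps s3) (QPwdim_summary S_exps s4) (QPwdim_summary S_exps s5).
by vm_compute; do 2!split.
Qed.

Lemma QP_posmon : QPdim (@posmon 6 10) = 65 /\ [/\ QPwdim (@posmon 6 10) omega1 = 0,
  QPwdim (@posmon 6 10) omega2 = 4, QPwdim (@posmon 6 10) omega3 = 10,
  QPwdim (@posmon 6 10) omega4 = 36 & QPwdim (@posmon 6 10) omega5 = 15].
Proof.
have /and5P[/eqP s1 /eqP s2 /eqP s3 /eqP s4 /eqP s5] := hit_summaries_pos.
have S_exps := @posmon_exps 6 10.
rewrite (QPdim_summary S_exps s1) (QPwdim_summary S_exps s1) (QPwdim_summary S_exps s2).
rewrite (QPwdim_summary S_exps s3) (QPwdim_summary S_exps s4) (QPwdim_summary S_exps s5).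
by vm_compute; do 2!split.
Qed.

Theorem mainTheorem7 :
  (* (i) *)
  QPdim (@allmon 6 10) =
    (QPwdim (@allmon 6 10) omega1 + QPwdim (@allmon 6 10) omega2
     + QPwdim (@allmon 6 10) omega3 + QPwdim (@allmon 6 10) omega4
     + QPwdim (@allmon 6 10) omega5)%N
  (* (ii) *)
  /\ QPdim (@zeromon 6 10) =
    (QPwdim (@zeromon 6 10) omega1 + QPwdim (@zeromon 6 10) omega2
     + QPwdim (@zeromon 6 10) omega3 + QPwdim (@zeromon 6 10) omega4)%N
  /\ QPdim (@posmon 6 10) =
    (QPwdim (@posmon 6 10) omega2 + QPwdim (@posmon 6 10) omega3
     + QPwdim (@posmon 6 10) omega4 + QPwdim (@posmon 6 10) omega5)%N
  /\ [seq QPwdim (@zeromon 6 10) w | w <- [:: omega1; omega2; omega3; omega4; omega5]]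
       = [:: 400; 30; 270; 180; 0]%N
  /\ [seq QPwdim (@posmon 6 10) w | w <- [:: omega1; omega2; omega3; omega4; omega5]]
       = [:: 0; 4; 10; 36; 15]%N.
Proof.
rewrite !map_cons; have [-> [-> -> -> -> ->]] := QP_allmon.
have [-> [-> -> -> -> ->]] := QP_zeromon.
by have [-> [-> -> -> -> ->]] := QP_posmon.
Qed.
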